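(* Let $(\rho,\sigma)\in\mathfrak V$ with $\sigma\le0$ and $P,Q\in W^{(l)}\setminus\{0\}$. If $[P,Q]_{\rho,\sigma}=0$, then $\mathrm{st}_{\rho,\sigma}(P)$ and $\mathrm{st}_{\rho,\sigma}(Q)$ are aligned, and $\mathrm{en}_{\rho,\sigma}(P)$ and $\mathrm{en}_{\rho,\sigma}(Q)$ are aligned.
   Context: $K$ is a field of characteristic zero, $l\in\mathbb{N}$. $W^{(l)}$ is the associative $K$-algebra with $K$-basis $\{X^{i/l}Y^j:i\in\mathbb{Z},j\in\mathbb{N}_0\}$, powers of $X$ multiplying as Laurent monomials and $[Y,X^\alpha]=\alpha X^{\alpha-1}$ for $\alpha\in\frac1l\mathbb{Z}$. $\Psi^{(l)}(X^{i/l}Y^j)=x^{i/l}y^j\in K[x^{\pm1/l},y]$; supports are sets of exponents with nonzero coefficient. $\mathfrak V=\{(\rho,\sigma)\in\mathbb{Z}^2:\gcd(\rho,\sigma)=1,\rho+\sigma>0\}$. For $P\ne0$: $v_{\rho,\sigma}(P)=\max\{\rho a+\sigma b:(a,b)\in\mathrm{Supp}(P)\}$; $\ell_{\rho,\sigma}(P)$ = sum of terms of $\Psi^{(l)}(P)$ attaining it; $\mathrm{st}_{\rho,\sigma}(P)$: among points $(a,b)\in\mathrm{Supp}(\ell_{\rho,\sigma}(P))$ maximizing $a-b$, the one with largest $a$; $\mathrm{en}_{\rho,\sigma}(P)$: among those maximizing $b-a$, the one with largest $b$. $[P,Q]_{\rho,\sigma}:=0$ if $[P,Q]=0$ or $v_{\rho,\sigma}([P,Q])<v_{\rho,\sigma}(P)+v_{\rho,\sigma}(Q)-(\rho+\sigma)$,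 else $\ell_{\rho,\sigma}([P,Q])$. Vectors $(a_1,a_2),(b_1,b_2)$ are aligned if $a_1b_2-a_2b_1=0$. *)

From HB Require Import structures.
From mathcomp Require Import all_boot all_order all_algebra.
From mathcomp Require Import finmap.
Set Implicit Arguments. Unset Strict Implicit. Unset Printing Implicit Defensive.
Import Order.TTheory GRing.Theory Num.Theory.
Local Open Scope ring_scope.

(* Elements of W^(l): finitely supported coefficient functions on the basis
   {X^{i/l} Y^j : i in Z, j in N}; the basis element X^{i/l}Y^j is indexed by
   (i, j) : int * nat. *)
Definition W (K : fieldType) := {fsfun (int * nat) -> K with 0}.

Definition W0 (K : fieldType) : W K := [fsfun].

Definition ffall (K : fieldType) (x : K) (k : nat) : K :=
  \prod_(i < k) (x - i%:R).

(* Product of basis elements: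
   (X^{a/l} Y^j)(X^{b/l} Y^m) = sum_{k<=j} C(j,k) (b/l)^{(k)} X^{(a+b-kl)/l} Y^{j+m-k},
   which is the multiplication of W^(l) determined by the Laurent rule for the
   powers of X and [Y, X^alpha] = alpha X^(alpha-1). *)
Definition Wmul_cands (l : nat) (K : fieldType) (P Q : W K) : seq (int * nat) :=
  flatten [seq [seq (p.1 + q.1 - (k * l)%:Z, (p.2 + q.2 - k)%N) | k <- iota 0 p.2.+1]
          | p <- enum_fset (finsupp P), q <- enum_fset (finsupp Q)].

Definition Wmul_coef (l : nat) (K : fieldType) (P Q : W K) (x : int * nat) : K :=
  \sum_(p <- enum_fset (finsupp P)) \sum_(q <- enum_fset (finsupp Q))
    \sum_(k < p.2.+1)
      (if (x == (p.1 + q.1 - (k * l)%:Z, (p.2 + q.2 - k)%N))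
       then P p * Q q * ('C(p.2, k))%:R * ffall (q.1%:~R / l%:R) k
       else 0).

Definition Wcomm (l : nat) (K : fieldType) (P Q : W K) : W K :=
  [fsfun x in [fset y | y in Wmul_cands l P Q ++ Wmul_cands l Q P]%fset =>
     Wmul_coef l P Q x - Wmul_coef l Q P x].

Definition expo (l : nat) (x : int * nat) : rat * rat :=
  (x.1%:~R / l%:R, x.2%:R).

Definition Supp (l : nat) (K : fieldType) (P : W K) : seq (rat * rat) :=
  [seq expo l x | x <- enum_fset (finsupp P)].

Definition maxf (T : Type) (f : T -> rat) (x0 : T) (s : seq T) : rat :=
  \big[Num.max/f (head x0 s)]_(x <- s) f x.

Definition wt (rho sigma : int) (e : rat * rat) : rat :=
  rho%:~R * e.1 + sigma%:~R * e.2.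

Definition vrs (l : nat) (K : fieldType) (rho sigma : int) (P : W K) : rat :=
  maxf (wt rho sigma) (0, 0) (Supp l P).

(* l_{rho,sigma}(P): sum of the terms attaining v_{rho,sigma}(P) (seen through
   Psi^(l), i.e. as the corresponding element with the same coefficients). *)
Definition ellrs (l : nat) (K : fieldType) (rho sigma : int) (P : W K) : W K :=
  [fsfun x in finsupp P =>
     if wt rho sigma (expo l x) == vrs l rho sigma P then P x else 0].

Definition bracket_rs (l : nat) (K : fieldType) (rho sigma : int) (P Q : W K) : W K :=
  let C := Wcomm l P Q in
  if (C == W0 K) ||
     (vrs l rho sigma C < vrs l rho sigma P + vrs l rho sigma Q - (rho + sigma)%:~R)
  then W0 K else ellrs l rho sigma C.

Definition st_rs (l : nat) (K : fieldType) (rho sigma : int) (P : W K) : rat * rat :=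
  let s := Supp l (ellrs l rho sigma P) in
  let m := maxf (fun e => e.1 - e.2) (0, 0) s in
  let s' := [seq e <- s | e.1 - e.2 == m] in
  let a := maxf fst (0, 0) s' in
  head (0, 0) [seq e <- s' | e.1 == a].

Definition en_rs (l : nat) (K : fieldType) (rho sigma : int) (P : W K) : rat * rat :=
  let s := Supp l (ellrs l rho sigma P) in
  let m := maxf (fun e => e.2 - e.1) (0, 0) s in
  let s' := [seq e <- s | e.2 - e.1 == m] in
  let b := maxf snd (0, 0) s' in
  head (0, 0) [seq e <- s' | e.2 == b].

Definition aligned (a b : rat * rat) : Prop := a.1 * b.2 - a.2 * b.1 = 0.

Definition in_frakV (rho sigma : int) : Prop :=
  gcdz rho sigma = 1%N /\ 0 < rho + sigma.

From HB Require Import structures.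
From mathcomp Require Import all_boot all_order all_algebra.
From mathcomp Require Import finmap.
From mathcomp Require Import ring lra.
Import Order.TTheory GRing.Theory Num.Theory.
Local Open Scope ring_scope.

(* st and en are the maxima of the support of the leading form for a lexicographic
   order (f, g) of linear forms, and the argument works for any such order. Let a, b be
   these maxima for P and Q. In [P, Q], the monomial of exponent a + b - (1, 1) gets
   from the order-zero terms of PQ and QP contributions that cancel, and otherwise only
   P_a Q_b (a_2 b_1 - b_2 a_1) / l: a term of exponent u + v - (k, k) = a + b - (1, 1)
   with k >= 1 has weight at least that of a + b - (k, k), which forces k = 1 because
   rho + sigma > 0, and then u = a, v = b because the order is additive and cancellative.
   That monomial has weight v(P) + v(Q) - (rho + sigma), so [P, Q]_{rho,sigma} = 0 gives
   a_2 b_1 = b_2 a_1 in characteristic zero, i.e. the exponents are aligned. *)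

Section Maxima.
Context {T : eqType} (f : T -> rat) (x0 : T).

Lemma maxf_ge s e : e \in s -> f e <= maxf f x0 s.
Proof. by move=> es; apply: (le_bigmax_seq _ e xpredT). Qed.

Lemma maxf_mem {s : seq T} : s != [::] -> exists2 e, e \in s & maxf f x0 s = f e.
Proof.
case: s => [//|x s] _; rewrite /maxf big_seq.
elim/big_rec: _ => [|y m ys [e es ->]]; first by exists x; rewrite ?mem_head.
have [fye|fey] := leP (f y) (f e); first by exists e; rewrite ?max_r.
by exists y; rewrite ?max_l ?ltW.
Qed.

End Maxima.

Definition lex_le (f g : rat * rat -> rat) (u v : rat * rat) : bool :=
  (f u <= f v) && ((f u == f v) ==> (g u <= g v)).

(* st_rs and en_rs are lex_argmax for the orders (a - b, a) and (b - a, b), by conversion. *)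
Definition lex_argmax (f g : rat * rat -> rat) (s : seq (rat * rat)) : rat * rat :=
  let s' := [seq e <- s | f e == maxf f (0, 0) s] in
  head (0, 0) [seq e <- s' | g e == maxf g (0, 0) s'].

Lemma lex_argmaxP f g {s : seq (rat * rat)} : s != [::] ->
  lex_argmax f g s \in s /\ {in s, forall e, lex_le f g e (lex_argmax f g s)}.
Proof.
move=> sN; rewrite /lex_argmax; set s' := filter _ s; set t := filter _ s'.
have [e es fe] := maxf_mem f (0, 0) sN.
have s'N : s' != [::] by rewrite -has_filter; apply/hasP; exists e; rewrite ?fe.
have [e' e's ge'] := maxf_mem g (0, 0) s'N.
have tN : t != [::] by rewrite -has_filter; apply/hasP; exists e'; rewrite ?ge'.
have : head (0, 0) t \in t by case: t tN => // *; apply: mem_head.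
rewrite !mem_filter => /and3P [/eqP gm /eqP fm ins]; split=> // x xs.
rewrite /lex_le fm maxf_ge //=; apply/implyP => /eqP fx.
by rewrite gm maxf_ge // mem_filter fx eqxx.
Qed.

Definition lex_cancellative (f g : rat * rat -> rat) := forall u v u' v',
  u + v = u' + v' -> lex_le f g u u' -> lex_le f g v v' -> u = u' /\ v = v'.

Lemma additive_lex_cancellative f g :
  {morph f : u v / u + v} -> {morph g : u v / u + v} ->
  injective (fun e => (f e, g e)) -> lex_cancellative f g.
Proof.
move=> fD gD fg_inj u v u' v' uv /andP [fu gu] /andP [fv gv].
have /(congr1 f) := uv; rewrite !fD => fuv.
have fu' : f u = f u' by lra.
have fv' : f v = f v' by lra.
have /(congr1 g) := uv; rewrite !gD => guv.
move: gu gv; rewrite fu' fv' !eqxx /= => gu gv.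
have gu' : g u = g u' by lra.
have gv' : g v = g v' by lra.
by split; apply: fg_inj; congr pair.
Qed.

Lemma lex_cancellative_st : lex_cancellative (fun e => e.1 - e.2) fst.
Proof.
apply: additive_lex_cancellative => [u v|//|[x y] [x' y'] [/= E xE]] /=.
  by rewrite opprD addrACA.
by move: E; rewrite xE => /addrI/oppr_inj->.
Qed.

Lemma lex_cancellative_en : lex_cancellative (fun e => e.2 - e.1) snd.
Proof.
apply: additive_lex_cancellative => [u v|//|[x y] [x' y'] [/= E yE]] /=.
  by rewrite opprD addrACA.
by move: E; rewrite yE => /addrI/oppr_inj->.
Qed.

Definition mul_index (l : nat) (p q : int * nat) (k : nat) : int * nat :=
  (p.1 + q.1 - (k * l)%:Z, (p.2 + q.2 - k)%N).

Lemma mul_indexC l p q k : mul_index l p q k = mul_index l q p k.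
Proof. by rewrite /mul_index [p.1 + _]addrC [(p.2 + _)%N]addnC. Qed.

Lemma expo_mul_index l p q k : (0 < l)%N -> (k <= p.2 + q.2)%N ->
  expo l (mul_index l p q k) = expo l p + expo l q - (k%:R, k%:R).
Proof.
move=> l0 kle; rewrite /expo /mul_index; congr pair => /=.
  by rewrite intrB intrD -pmulrn natrM; field; rewrite pnatr_eq0 eqn0Ngt l0.
by rewrite natrB // natrD.
Qed.

Lemma expo_inj {l : nat} : (0 < l)%N -> injective (expo l).
Proof.
move=> l0 [x1 x2] [y1 y2] [E1 /eqP]; rewrite eqr_nat => /eqP E2.
move: E1 => /(congr1 (fun t => t * l%:R)); rewrite !divfK ?pnatr_eq0 -?lt0n //.
by move/intr_inj => /= E1; congr pair.
Qed.

Lemma wt_shift rho sigma u v c :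
  wt rho sigma (u + v - (c, c)) = wt rho sigma u + wt rho sigma v - (rho + sigma)%:~R * c.
Proof. by rewrite /wt /= intrD; ring. Qed.

Lemma aligned_expo l a b : (0 < l)%N ->
  aligned (expo l a) (expo l b) <-> a.2%:Z * b.1 - b.2%:Z * a.1 = 0.
Proof.
move=> l0; rewrite /aligned /expo /=.
have -> : a.1%:~R / l%:R * b.2%:R - a.2%:R * (b.1%:~R / l%:R)
          = - ((a.2%:Z * b.1 - b.2%:Z * a.1)%:~R / l%:R) :> rat.
  by rewrite intrB !intrM -!pmulrn; ring.
split=> [/eqP|->]; last by rewrite mul0r oppr0.
rewrite oppr_eq0 mulf_eq0 invr_eq0 pnatr_eq0 eqn0Ngt l0 orbF intq_eq0.
by move/eqP.
Qed.

Section Support.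
Context {K : fieldType} (l : nat) (rho sigma : int).
Implicit Types (P : W K) (x : int * nat).

Lemma W0E x : W0 K x = 0.
Proof. by rewrite fsfunE. Qed.

Lemma finsupp_neq0 P : P != W0 K -> exists x, x \in finsupp P.
Proof.
move=> PN; have [P0|[x xP]] := fset_0Vmem (finsupp P); last by exists x.
by case/eqP: PN; apply/fsfunP => x; rewrite W0E fsfun_dflt // P0 in_fset0.
Qed.

Lemma mem_Supp P x : x \in finsupp P -> expo l x \in Supp l P.
Proof. exact: map_f. Qed.

Lemma wt_le_vrs P x : x \in finsupp P -> wt rho sigma (expo l x) <= vrs l rho sigma P.
Proof. by move=> /mem_Supp; apply: maxf_ge. Qed.

Lemma ellrsE P x : ellrs l rho sigma P x =
  if (x \in finsupp P) && (wt rho sigma (expo l x) == vrs l rho sigma P) then P x else 0.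
Proof. by rewrite fsfunE; case: (x \in finsupp P). Qed.

Lemma mem_finsupp_ellrs P x :
  (x \in finsupp (ellrs l rho sigma P)) =
  (x \in finsupp P) && (wt rho sigma (expo l x) == vrs l rho sigma P).
Proof.
rewrite !mem_finsupp ellrsE mem_finsupp.
case Px: (P x == 0); first by rewrite /= eqxx.
by case: (wt _ _ _ == _); rewrite /= ?Px ?eqxx.
Qed.

Lemma finsupp_ellrs_neq0 P : P != W0 K -> exists x, x \in finsupp (ellrs l rho sigma P).
Proof.
move=> /finsupp_neq0 [x /mem_Supp xS].
have SN : Supp l P != [::] by case: (Supp l P) xS.
have [e /mapP [y yP ->] vy] := maxf_mem (wt rho sigma) (0, 0) SN.
by exists y; rewrite mem_finsupp_ellrs yP /vrs vy eqxx.
Qed.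

Lemma ellrs_neq0 P : P != W0 K -> ellrs l rho sigma P != W0 K.
Proof.
move=> /finsupp_ellrs_neq0 [x xL]; apply: contraTneq xL => ->.
by rewrite mem_finsupp W0E eqxx.
Qed.

End Support.

Definition lex_leading l {K : fieldType} rho sigma f g (P : W K) (a : int * nat) :=
  a \in finsupp (ellrs l rho sigma P) /\
  {in finsupp (ellrs l rho sigma P), forall p, lex_le f g (expo l p) (expo l a)}.

Lemma lex_argmax_leading l {K : fieldType} rho sigma f g {P : W K} : P != W0 K ->
  exists2 a, lex_leading l rho sigma f g P a &
             expo l a = lex_argmax f g (Supp l (ellrs l rho sigma P)).
Proof.
move=> /(finsupp_ellrs_neq0 l rho sigma) [x /(mem_Supp l) xS].
have SN : Supp l (ellrs l rho sigma P) != [::] by case: (Supp _ _) xS.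
have [/mapP [a aL aE] amax] := lex_argmaxP f g SN.
by exists a => //; split=> // p /(mem_Supp l) pS; rewrite -aE; apply: amax.
Qed.

Lemma sum_shift_lex_unique {rho sigma : int} {f g : rat * rat -> rat}
    {a b u v : rat * rat} {k : nat} :
  0 < rho + sigma -> lex_cancellative f g ->
  wt rho sigma u <= wt rho sigma a -> wt rho sigma v <= wt rho sigma b ->
  (wt rho sigma u = wt rho sigma a -> lex_le f g u a) ->
  (wt rho sigma v = wt rho sigma b -> lex_le f g v b) ->
  (0 < k)%N -> u + v - (k%:R, k%:R) = a + b - (1, 1) ->
  [/\ u = a, v = b & k = 1%N].
Proof.
move=> rs fg_canc ua vb ulex vlex k0 uvE.
have /(congr1 (wt rho sigma)) := uvE; rewrite !wt_shift => wE.
have rs' : 0 < (rho + sigma)%:~R :> rat by rewrite ltr0z.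
have k1 : k = 1%N.
  have : (rho + sigma)%:~R * k%:R <= (rho + sigma)%:~R * 1 :> rat by lra.
  by rewrite ler_pM2l // lern1 => k1; apply/eqP; rewrite eqn_leq k1.
move: uvE wE; rewrite k1 => /addIr uvE wE.
have [] := fg_canc u v a b uvE; [apply: ulex | apply: vlex | by move=> -> ->]; lra.
Qed.

Lemma lex_leading_mul_index_unique l {K : fieldType} rho sigma f g (P Q : W K) a b p q k :
  (0 < l)%N -> 0 < rho + sigma -> lex_cancellative f g ->
  lex_leading l rho sigma f g P a -> lex_leading l rho sigma f g Q b ->
  p \in finsupp P -> q \in finsupp Q -> (0 < k <= p.2 + q.2)%N -> (0 < a.2 + b.2)%N ->
  mul_index l p q k = mul_index l a b 1 -> [/\ p = a, q = b & k = 1%N].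
Proof.
move=> l0 rs fg_canc [aL amax] [bL bmax] pP qQ /andP [k0 kpq] ab0 pqE.
move: (aL) (bL); rewrite !mem_finsupp_ellrs => /andP [_ /eqP wa] /andP [_ /eqP wb].
have /(congr1 (expo l)) := pqE; rewrite !expo_mul_index // => E.
have wpa : wt rho sigma (expo l p) <= wt rho sigma (expo l a) by rewrite wa wt_le_vrs.
have wqb : wt rho sigma (expo l q) <= wt rho sigma (expo l b) by rewrite wb wt_le_vrs.
have pa : wt rho sigma (expo l p) = wt rho sigma (expo l a) -> lex_le f g (expo l p) (expo l a).
  by move=> wp; apply: amax; rewrite mem_finsupp_ellrs pP wp wa eqxx.
have qb : wt rho sigma (expo l q) = wt rho sigma (expo l b) -> lex_le f g (expo l q) (expo l b).
  by move=> wq; apply: bmax; rewrite mem_finsupp_ellrs qQ wq wb eqxx.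
by have [/(expo_inj l0) -> /(expo_inj l0) -> ->] :=
  sum_shift_lex_unique rs fg_canc wpa wqb pa qb k0 E.
Qed.

Lemma sum3_seq_single (R : nmodType) (A B : eqType) (s : seq A) (t : seq B)
    (n : A -> nat) (G : A -> B -> nat -> R) a b :
  uniq s -> uniq t -> a \in s -> b \in t ->
  (forall p q k, p \in s -> q \in t -> (k < n p)%N -> G p q k != 0 ->
     [/\ p = a, q = b & k = 0%N]) ->
  \sum_(p <- s) \sum_(q <- t) \sum_(k < n p) G p q k =
  if (0 < n a)%N then G a b 0%N else 0.
Proof.
move=> us ut a_s b_t G_single.
rewrite (bigD1_seq a) //= [X in _ + X]big1_seq ?addr0; last first.
  move=> p /andP [pa ps]; apply: big1_seq => q /andP [_ qt]; apply: big1 => k _.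
  apply/eqP; apply: contraT => /(G_single _ _ _ ps qt (ltn_ord k)) [pe _ _].
  by rewrite pe eqxx in pa.
rewrite (bigD1_seq b) //= [X in _ + X]big1_seq ?addr0; last first.
  move=> q /andP [qb qt]; apply: big1 => k _.
  apply/eqP; apply: contraT => /(G_single _ _ _ a_s qt (ltn_ord k)) [_ qe _].
  by rewrite qe eqxx in qb.
case E: (n a) => [|m] /=; first by rewrite big_ord0.
rewrite big_ord_recl big1 ?addr0 // => k _.
apply/eqP; apply: contraT => /(G_single _ _ _ a_s b_t); rewrite E => /(_ (ltn_ord _)) [_ _].
by rewrite lift0.
Qed.

Section Coefficients.
Context (l : nat) {K : fieldType}.
Implicit Types (P Q : W K) (x : int * nat).

Definition symbol_mul_coef P Q x : K :=
  \sum_(p <- enum_fset (finsupp P)) \sum_(q <- enum_fset (finsupp Q))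
    (if x == (p.1 + q.1, (p.2 + q.2)%N) then P p * Q q else 0).

Definition Wmul_corr_coef P Q x : K :=
  \sum_(p <- enum_fset (finsupp P)) \sum_(q <- enum_fset (finsupp Q))
    \sum_(k < p.2)
      (if x == mul_index l p q k.+1
       then P p * Q q * ('C(p.2, k.+1))%:R * ffall (q.1%:~R / l%:R) k.+1
       else 0).

Lemma Wmul_coefE P Q x :
  Wmul_coef l P Q x = symbol_mul_coef P Q x + Wmul_corr_coef P Q x.
Proof.
rewrite -big_split; apply: eq_bigr => p _; rewrite -big_split.
apply: eq_bigr => q _; rewrite big_ord_recl.
by rewrite mul0n subr0 subn0 bin0 /ffall big_ord0 !mulr1.
Qed.

Lemma symbol_mul_coefC P Q x : symbol_mul_coef P Q x = symbol_mul_coef Q P x.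
Proof.
rewrite /symbol_mul_coef exchange_big; apply: eq_bigr => q _; apply: eq_bigr => p _.
by rewrite addrC addnC mulrC.
Qed.

Lemma WcommE P Q x : x \in Wmul_cands l P Q ++ Wmul_cands l Q P ->
  Wcomm l P Q x = Wmul_corr_coef P Q x - Wmul_corr_coef Q P x.
Proof.
move=> xC; rewrite fsfunE ifT ?in_fset // !Wmul_coefE symbol_mul_coefC.
by rewrite opprD addrACA subrr add0r.
Qed.

Lemma mul_index_mem_cands P Q p q k :
  p \in finsupp P -> q \in finsupp Q -> (k <= p.2)%N -> mul_index l p q k \in Wmul_cands l P Q.
Proof.
move=> pP qQ kp; apply/flattenP; exists [seq mul_index l p q j | j <- iota 0 p.2.+1].
  exact: (allpairs_f (fun p q => [seq mul_index l p q j | j <- iota 0 p.2.+1])).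
by apply: map_f; rewrite mem_iota.
Qed.

Lemma Wmul_corr_coef_single P Q a b : a \in finsupp P -> b \in finsupp Q ->
  (forall p q k, p \in finsupp P -> q \in finsupp Q -> (0 < k <= p.2)%N ->
     mul_index l p q k = mul_index l a b 1 -> [/\ p = a, q = b & k = 1%N]) ->
  Wmul_corr_coef P Q (mul_index l a b 1) = P a * Q b * a.2%:R * (b.1%:~R / l%:R).
Proof.
move=> aP bQ ab_single.
pose G p q k := if mul_index l a b 1 == mul_index l p q k.+1
  then P p * Q q * ('C(p.2, k.+1))%:R * ffall (q.1%:~R / l%:R) k.+1 else 0.
rewrite /Wmul_corr_coef (@sum3_seq_single _ _ _ _ _ snd G a b) ?fset_uniq // /G.
  case: posnP => [->|_]; first by rewrite mulr0 mul0r.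
  by rewrite eqxx bin1 /ffall big_ord1 subr0.
move=> p q k pP qQ kp; case: ifP => [/eqP pqE _|]; last by rewrite eqxx.
by have [-> -> [->]] := ab_single p q k.+1 pP qQ kp (esym pqE).
Qed.

End Coefficients.

Lemma Wcomm_corner {l : nat} {K : fieldType} {rho sigma : int} {f g : rat * rat -> rat}
    {P Q : W K} {a b : int * nat} :
  (0 < l)%N -> 0 < rho + sigma -> lex_cancellative f g ->
  lex_leading l rho sigma f g P a -> lex_leading l rho sigma f g Q b ->
  (0 < a.2 + b.2)%N ->
  Wcomm l P Q (mul_index l a b 1) =
    P a * Q b * ((a.2%:Z * b.1 - b.2%:Z * a.1)%:~R / l%:R).
Proof.
move=> l0 rs fg_canc aP bQ ab0.
have [aS bS] : a \in finsupp P /\ b \in finsupp Q.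
  by move: aP.1 bQ.1; rewrite !mem_finsupp_ellrs => /andP [? _] /andP [? _].
have uniqPQ p q k : p \in finsupp P -> q \in finsupp Q -> (0 < k <= p.2 + q.2)%N ->
    mul_index l p q k = mul_index l a b 1 -> [/\ p = a, q = b & k = 1%N].
  by move=> pP qQ kpq; apply: lex_leading_mul_index_unique aP bQ pP qQ kpq ab0.
rewrite WcommE; last first.
  rewrite mem_cat; have [a0|a_gt0] := posnP a.2.
    by rewrite a0 add0n in ab0; rewrite orbC mul_indexC mul_index_mem_cands.
  by rewrite mul_index_mem_cands.
rewrite Wmul_corr_coef_single //; last first.
  move=> p q k pP qQ /andP [k0 kp]; apply: uniqPQ => //.
  by rewrite k0 (leq_trans kp (leq_addr _ _)).
rewrite mul_indexC Wmul_corr_coef_single //; last first.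
  move=> q p k qQ pP /andP [k0 kq]; rewrite mul_indexC (mul_indexC l b) => E.
  have [|-> -> ->] // := uniqPQ p q k pP qQ _ E.
  by rewrite k0 (leq_trans kq (leq_addl _ _)).
by rewrite intrB !intrM -!pmulrn; ring.
Qed.

Lemma bracket_rs_neq0 l {K : fieldType} rho sigma (P Q : W K) z :
  Wcomm l P Q z != 0 ->
  vrs l rho sigma P + vrs l rho sigma Q - (rho + sigma)%:~R <= wt rho sigma (expo l z) ->
  bracket_rs l rho sigma P Q != W0 K.
Proof.
move=> Cz wz; have CN : Wcomm l P Q != W0 K by apply: contra Cz => /eqP ->; rewrite W0E.
have zC : wt rho sigma (expo l z) <= vrs l rho sigma (Wcomm l P Q).
  by apply: wt_le_vrs; rewrite mem_finsupp.
rewrite /bracket_rs (negbTE CN) /= ifF ?ellrs_neq0 //.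
by apply/negbTE; rewrite -leNgt (le_trans wz zC).
Qed.

Lemma intr_neq0 {K : fieldType} (z : int) :
  [pchar K] =i pred0 -> z != 0 -> z%:~R != 0 :> K.
Proof.
move=> /pcharf0P K0; case: z => n nz; first by rewrite -pmulrn K0.
by rewrite NegzE intrN oppr_eq0 -pmulrn K0.
Qed.

Lemma lex_argmax_aligned l {K : fieldType} rho sigma f g (P Q : W K) :
  [pchar K] =i pred0 -> (0 < l)%N -> 0 < rho + sigma -> lex_cancellative f g ->
  P != W0 K -> Q != W0 K -> bracket_rs l rho sigma P Q = W0 K ->
  aligned (lex_argmax f g (Supp l (ellrs l rho sigma P)))
          (lex_argmax f g (Supp l (ellrs l rho sigma Q))).
Proof.
move=> K0 l0 rs fg_canc PN QN bPQ.
have [a aP <-] := lex_argmax_leading l rho sigma f g PN.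
have [b bQ <-] := lex_argmax_leading l rho sigma f g QN.
apply/aligned_expo => //; apply/eqP; apply: contraT => cross.
have ab0 : (0 < a.2 + b.2)%N.
  rewrite lt0n; apply: contra cross; rewrite addn_eq0 => /andP [/eqP-> /eqP->].
  by rewrite !mul0r subrr.
move: aP.1 bQ.1; rewrite !mem_finsupp_ellrs => /andP [aS /eqP wa] /andP [bS /eqP wb].
suff : bracket_rs l rho sigma P Q != W0 K by rewrite bPQ eqxx.
apply: (bracket_rs_neq0 l rho sigma P Q (mul_index l a b 1)).
  rewrite (Wcomm_corner l0 rs fg_canc aP bQ ab0) !mulf_neq0 -?mem_finsupp //.
    exact: intr_neq0.
  by rewrite invr_eq0 (pcharf0P _).1 // eqn0Ngt l0.
by rewrite expo_mul_index // wt_shift wa wb mulr1.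
Qed.

Theorem corollary2p7 (K : fieldType) (l : nat) (rho sigma : int) (P Q : W K) :
  [pchar K] =i pred0 -> (0 < l)%N ->
  in_frakV rho sigma -> sigma <= 0 ->
  P != W0 K -> Q != W0 K ->
  bracket_rs l rho sigma P Q = W0 K ->
  aligned (st_rs l rho sigma P) (st_rs l rho sigma Q) /\
  aligned (en_rs l rho sigma P) (en_rs l rho sigma Q).
Proof.
move=> K0 l0 [_ rs] _ PN QN bPQ; split.
- exact: lex_argmax_aligned K0 l0 rs lex_cancellative_st PN QN bPQ.
- exact: lex_argmax_aligned K0 l0 rs lex_cancellative_en PN QN bPQ.
Qed.
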